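(* For all Maya diagrams $\sigma,\sigma'$, \[ \langle\sigma',A(x;t)\sigma\rangle=\sum_{h}\prod_{i\in\mathbb{Z}}\Omega(h_{i-1},\sigma_i,h_i,\sigma'_i), \] where the sum runs over all row configurations $h$ from $\sigma$ to $\sigma'$ and the vertex weights are $\omega_1=\omega_3=\omega_5=1$, $\omega_2=-x$, $\omega_4=tx$, $\omega_6=(t-1)x$.
   Context: Maya diagrams are maps $\sigma:\mathbb{Z}\to\{0,1\}$ with $\sigma_i=1$ for $i\ll0$ and $\sigma_i=0$ for $i\gg0$. $\mathcal{F}(t)$ is the $\mathbb{C}(t)$-space with basis the Maya diagrams, with the bilinear form $\langle\cdot,\cdot\rangle$ making them orthonormal. Operators: $\psi^+_i(t)\sigma=(\sigma+\epsilon_i)\prod_{j>i}(-t)^{\sigma_j}$ if $\sigma_i=0$, else $0$; $\psi^-_i(t)\sigma=(\sigma-\epsilon_i)\prod_{j>i}(-t)^{-\sigma_j}$ if $\sigma_i=1$, else $0$ ($\epsilon_i$ the indicator of $i$); $E_{ij}(t)=(1-t)\psi_i^-(t)\psi_j^+(t)$; $A(x;t)=1+\sum_{r>0}\sum_{i_1<j_1<\cdots<i_r<j_r}(xt)^{j_1-i_1+\cdots+j_r-i_r}E_{i_1j_1}(t)\cdots E_{i_rj_r}(t)$. Six-vertex row configurations: a vertex is a 4-tuple (W,N,E,S) of edge values in $\{0,1\}$; the allowed ones and their weights are $\Omega(0,0,0,0)=\omega_1$, $\Omega(1,1,1,1)=\omega_2$, $\Omega(0,1,0,1)=\omega_3$,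 $\Omega(1,0,1,0)=\omega_4$, $\Omega(1,0,0,1)=\omega_5$, $\Omega(0,1,1,0)=\omega_6$, and $\Omega=0$ for all other tuples. A row configuration from $\sigma$ (top) to $\sigma'$ (bottom) is a map $h:\mathbb{Z}\to\{0,1\}$ ($h_i$ the horizontal edge between vertices $i$ and $i+1$) with $h_i=0$ for all $|i|$ sufficiently large and such that $(h_{i-1},\sigma_i,h_i,\sigma'_i)$ is allowed for every $i$. *)

From HB Require Import structures.
From mathcomp Require Import all_boot all_order all_algebra.
From mathcomp Require Import boolp classical_sets fsbigop.
Set Implicit Arguments. Unset Strict Implicit. Unset Printing Implicit Defensive.
Import Order.TTheory GRing.Theory Num.Theory.
Local Open Scope ring_scope.
Local Open Scope classical_set_scope.

Definition is_maya (sigma : int -> bool) : Prop :=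
  exists L M : int, (forall i, i < L -> sigma i) /\ (forall i, M < i -> ~~ sigma i).

(* sigma + eps_i and sigma - eps_i (only used where sigma_i = 0, resp. 1). *)
Definition maya_set (sigma : int -> bool) (i : int) : int -> bool :=
  fun j => if j == i then true else sigma j.
Definition maya_unset (sigma : int -> bool) (i : int) : int -> bool :=
  fun j => if j == i then false else sigma j.

Section Fock.
Variable K : fieldType.

(* Elements of F(t) of the form  c * sigma  (a scalar multiple of a basis
   vector); this set is stable under all the operators considered, which map
   basis vectors to scalar multiples of basis vectors. *)
Definition kvec := (K * (int -> bool))%type.

(* <sigma', c * tau> for the bilinear form making Maya diagrams orthonormal *)
Definition pairing (sigma' : int -> bool) (v : kvec) : K :=
  if `[< v.2 = sigma' >] then v.1 else 0.

Definition sign_above (t : K) (sigma : int -> bool) (i : int) : K :=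
  \big[*%R/1]_(j \in [set j : int | i < j]) ((- t) ^+ sigma j).

Definition psi_plus (t : K) (i : int) (v : kvec) : kvec :=
  if v.2 i then (0, v.2)
  else (v.1 * sign_above t v.2 i, maya_set v.2 i).

Definition psi_minus (t : K) (i : int) (v : kvec) : kvec :=
  if v.2 i then (v.1 * (sign_above t v.2 i)^-1, maya_unset v.2 i)
  else (0, v.2).

Definition Eop (t : K) (i j : int) (v : kvec) : kvec :=
  let w := psi_minus t i (psi_plus t j v) in ((1 - t) * w.1, w.2).

Definition interlaced (s : seq (int * int)) : bool :=
  sorted <%R (flatten [seq [:: p.1; p.2] | p <- s]).

Definition Eprod (t : K) (s : seq (int * int)) (v : kvec) : kvec :=
  foldr (fun p w => Eop t p.1 p.2 w) v s.

Definition Eweight (s : seq (int * int)) : nat :=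
  (\sum_(p <- s) `|p.2 - p.1|)%N.

(* <sigma', A(x;t) sigma>, where
   A(x;t) = 1 + sum_{r>0} sum_{i1<j1<...<ir<jr} (xt)^{sum (j-i)} E_{i1j1}...E_{irjr};
   the matrix coefficient is the (finitely supported) sum of the matrix
   coefficients of the individual terms. *)
Definition A_coef (x t : K) (sigma' sigma : int -> bool) : K :=
  pairing sigma' (1, sigma) +
  \sum_(s \in [set s : seq (int * int) | s != [::] /\ interlaced s])
     ((x * t) ^+ Eweight s * pairing sigma' (Eprod t s (1, sigma))).

Definition vertex_allowed (W N E S : bool) : bool :=
  (W, N, E, S) \in [:: (false, false, false, false); (true, true, true, true);
                      (false, true, false, true); (true, false, true, false);
                      (true, false, false, true); (false, true, true, false)].

Definition Omega (w1 w2 w3 w4 w5 w6 : K) (W N E S : bool) : K :=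
  match W, N, E, S with
  | false, false, false, false => w1
  | true, true, true, true => w2
  | false, true, false, true => w3
  | true, false, true, false => w4
  | true, false, false, true => w5
  | false, true, true, false => w6
  | _, _, _, _ => 0
  end.

(* h : Z -> {0,1}, h_i = horizontal edge between vertices i and i+1 *)
Definition row_config (sigma sigma' h : int -> bool) : Prop :=
  (exists N : int, forall i, N < `|i| -> ~~ h i) /\
  (forall i : int, vertex_allowed (h (i - 1)) (sigma i) (h i) (sigma' i)).

Definition row_partition (w1 w2 w3 w4 w5 w6 : K) (sigma sigma' : int -> bool) : K :=
  \sum_(h \in [set h : int -> bool | row_config sigma sigma' h])
    \big[*%R/1]_(i \in [set: int])
      Omega w1 w2 w3 w4 w5 w6 (h (i - 1)) (sigma i) (h i) (sigma' i).

End Fock.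

(* The sequences i1 < j1 < ... < ir < jr indexing A(x;t) correspond bijectively
   to the finitely supported rows h, by taking for h the indicator of the union of
   the intervals [ik, jk); h then changes value exactly at the endpoints.
   E_{i1 j1} ... E_{ir jr} moves a particle from each ik to jk, so the term of such
   a sequence is nonzero only if sigma has a particle at every ik and a hole at
   every jk, and it then pairs only with sigma' = sigma + sum_k (eps_jk - eps_ik):
   these are exactly the conditions for h to be a row configuration from sigma to
   sigma'.  The coefficient factors over the intervals: the signs of psi_i^- psi_j^+
   contribute (1 - t) / ((-t) prod_{i<k<j} (-t)^sigma_k), and multiplied by
   (xt)^(j-i) this is (t - 1) x prod_{i<k<j} (sigma_k ? -x : tx), the product of the
   vertex weights along [i, j]. *)

From HB Require Import structures.
From mathcomp Require Import all_boot all_order all_algebra.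
From mathcomp Require Import boolp classical_sets functions fsbigop.
From mathcomp Require Import zify ring.
Set Implicit Arguments. Unset Strict Implicit. Unset Printing Implicit Defensive.
Import Order.TTheory GRing.Theory Num.Theory.
Local Open Scope ring_scope.
Local Open Scope classical_set_scope.

Section IntFsbig.
Variables (R : Type) (idx : R) (op : Monoid.com_law idx).

Lemma fsbigT_int_window (F : int -> R) (a : int) (n : nat) :
  (forall l, (l < a) || (a + n%:Z <= l) -> F l = idx) ->
  \big[op/idx]_(l \in [set: int]) F l = \big[op/idx]_(k < n) F (a + k%:Z).
Proof.
move=> F_out.
rewrite -(big_mkord xpredT (fun k => F (a + k%:Z))).
rewrite -(big_map (fun k : nat => a + k%:Z) xpredT F).
rewrite [RHS]fsbig_seq; last by rewrite map_inj_uniq ?iota_uniq // => u v /= /eqP; lia.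
apply/esym/fsbig_widen => // l [_ /= l_out]; rewrite /= F_out //.
apply/negP => l_in; apply: l_out; apply/mapP; exists `|l - a|%N; last lia.
by rewrite mem_iota; lia.
Qed.

Lemma fsbigT_int_split (G H : int -> R) (aG bG aH bH : int) :
  (forall l, (l < aG) || (bG < l) -> G l = idx) ->
  (forall l, (l < aH) || (bH < l) -> H l = idx) ->
  \big[op/idx]_(l \in [set: int]) op (G l) (H l) =
  op (\big[op/idx]_(l \in [set: int]) G l) (\big[op/idx]_(l \in [set: int]) H l).
Proof.
move=> G_out H_out; pose a := Num.min aG aH.
rewrite !(@fsbigT_int_window _ a `|Num.max bG bH - a + 1|) ?big_split //.
- by move=> l l_out; apply: H_out; lia.
- by move=> l l_out; apply: G_out; lia.
- by move=> l l_out; rewrite G_out ?H_out ?Monoid.mulm1 //; lia.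
Qed.

End IntFsbig.

Definition covered (s : seq (int * int)) (l : int) : bool :=
  has (fun p => p.1 <= l < p.2) s.

Definition endpoint (s : seq (int * int)) (l : int) : bool :=
  has (fun p => (l == p.1) || (l == p.2)) s.

Lemma covered_cons p s l : covered (p :: s) l = (p.1 <= l < p.2) || covered s l.
Proof. by []. Qed.

Lemma endpoint_cons p s l :
  endpoint (p :: s) l = (l == p.1) || (l == p.2) || endpoint s l.
Proof. by []. Qed.

Lemma interlaced_cons (x y : int) s : interlaced ((x, y) :: s) =
  (x < y) && (if s is q :: _ then (y < q.1) && interlaced s else true).
Proof. by case: s => [|[u v] s]; rewrite /interlaced /= ?andbT ?andbA. Qed.

Lemma interlaced_inv (x y : int) s : interlaced ((x, y) :: s) ->
  [/\ x < y, interlaced s & forall q, q \in s -> y < q.1].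
Proof.
elim: s x y => [|[u v] s IHs] x y; rewrite interlaced_cons; first by rewrite andbT.
move=> /andP[xy /andP[/= yu uvs]]; split => //.
have [uv _ vs] := IHs _ _ uvs.
by move=> q; rewrite inE => /orP[/eqP -> //|/vs /=]; lia.
Qed.

Lemma interlaced_lt s : interlaced s -> forall q, q \in s -> q.1 < q.2.
Proof.
elim: s => [|[x y] s IHs] // /interlaced_inv[xy /IHs lt_s _] q.
by rewrite inE => /orP[/eqP -> //|/lt_s].
Qed.

Lemma interlaced_tail (x y : int) s : interlaced ((x, y) :: s) ->
  forall l, l <= y -> covered s l = false /\ endpoint s l = false.
Proof.
move=> /interlaced_inv[_ /interlaced_lt lt_s y_s] l ly.
by split; apply/hasP => -[[u v] uvs /=]; have := y_s _ uvs; have := lt_s _ uvs => /=; lia.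
Qed.

Lemma interlaced_below (x y : int) s : interlaced ((x, y) :: s) ->
  forall l, l < x -> covered ((x, y) :: s) l = false.
Proof.
move=> xys l lx; have [xy _ _] := interlaced_inv xys.
have [/= -> _] := interlaced_tail xys (ltW (lt_trans lx xy)); lia.
Qed.

Lemma covered_bounded s : exists lo hi : int, forall l, (l < lo) || (hi < l) ->
  covered s l = false /\ endpoint s l = false.
Proof.
elim: s => [|[u v] s [lo [hi IHs]]]; first by exists 0, 0.
exists (Num.min lo (Num.min u v)), (Num.max hi (Num.max u v)) => l l_out.
rewrite covered_cons endpoint_cons.
have [-> ->] : covered s l = false /\ endpoint s l = false by apply: IHs; lia.
by rewrite /= !orbF; split; lia.
Qed.

Lemma covered_jump s : interlaced s ->
  forall l, covered s (l - 1) (+) covered s l = endpoint s l.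
Proof.
elim: s => [|[x y] s IHs] // xys l; have [xy xs _] := interlaced_inv xys.
rewrite !covered_cons endpoint_cons /=.
have [ly|yl] := lerP l y.
  have [-> ->] := interlaced_tail xys ly.
  have ly1 : l - 1 <= y by lia.
  by have [-> _] := interlaced_tail xys ly1; rewrite !orbF; lia.
rewrite -IHs //.
have -> : (x <= l - 1 < y) = false by lia.
have -> : (x <= l < y) = false by lia.
by have -> : (l == x) || (l == y) = false by lia.
Qed.

Lemma covered_inj s1 s2 : interlaced s1 -> interlaced s2 ->
  covered s1 =1 covered s2 -> s1 = s2.
Proof.
elim: s1 s2 => [|[a b] s1 IHs] [|[c d] s2] //.
- by move=> _ /interlaced_inv[cd _ _] /(_ c); rewrite covered_cons /=; lia.
- by move=> /interlaced_inv[ab _ _] _ /(_ a); rewrite covered_cons /=; lia.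
move=> abs cds E; have [ab s1i _] := interlaced_inv abs.
have [cd s2i _] := interlaced_inv cds.
have ac : a = c.
  have [lt|lt|//] := ltgtP a c.
    by move: (E a); rewrite (interlaced_below cds lt) covered_cons /=; lia.
  by move: (E c); rewrite (interlaced_below abs lt) covered_cons /=; lia.
subst c; have bd : b = d.
  have [lt|lt|//] := ltgtP b d.
    have [s1b _] := interlaced_tail abs (lexx b).
    by move: (E b); rewrite !covered_cons s1b /=; lia.
  have [s2d _] := interlaced_tail cds (lexx d).
  by move: (E d); rewrite !covered_cons s2d /=; lia.
subst d; congr cons; apply: IHs => // l.
have [lb|bl] := lerP l b.
  by have [-> _] := interlaced_tail abs lb; have [-> _] := interlaced_tail cds lb.
by move: (E l); rewrite !covered_cons /=; have -> : (a <= l < b) = false by lia.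
Qed.

Definition prepend_cell (a : int) (s : seq (int * int)) : seq (int * int) :=
  if s is (u, v) :: r then (if u == a + 1 then (a, v) :: r else (a, a + 1) :: s)
  else [:: (a, a + 1)].

Lemma prepend_cellP a s : interlaced s -> (forall q, q \in s -> a < q.1) ->
  [/\ interlaced (prepend_cell a s),
      forall l, covered (prepend_cell a s) l = (l == a) || covered s l &
      forall q, q \in prepend_cell a s -> a <= q.1].
Proof.
case: s => [|[u v] s] /= uvs a_s.
  split => [|l|q]; first by rewrite /interlaced /=; lia.
    by rewrite /covered /= !orbF; lia.
  by rewrite inE => /eqP ->.
have /= au := a_s _ (mem_head _ _); have [uv _ v_s] := interlaced_inv uvs.
have a_s' q : q \in s -> a + 1 < q.1.
  by case: q => u' v' q_s; have := v_s _ q_s => /=; lia.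
case: eqVneq => [eu|nu]; split.
- by move: uvs; rewrite !interlaced_cons => /andP[_ ->]; rewrite andbT; lia.
- by move=> l; rewrite !covered_cons /=; lia.
- by case=> u' v'; rewrite inE => /orP[/eqP [-> _] //|/a_s' /=]; lia.
- by rewrite interlaced_cons uvs /=; lia.
- by move=> l; rewrite !covered_cons /=; lia.
- case=> u' v'; rewrite !inE => /orP[/eqP [-> _] //=|].
  by move=> /orP[/eqP [-> _] /=|/a_s' /=]; lia.
Qed.

Lemma covered_surj (n : nat) (a : int) (h : int -> bool) :
  (forall l, h l -> a <= l < a + n%:Z) ->
  exists s, [/\ interlaced s, covered s =1 h & forall q, q \in s -> a <= q.1].
Proof.
elim: n a h => [|n IHn] a h h_in.
  by exists [::]; split => // l; apply/esym/negP => /h_in; lia.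
have [s [si cov a_s]] : exists s, [/\ interlaced s,
    covered s =1 (fun l => h l && (l != a)) & forall q, q \in s -> a + 1 <= q.1].
  by apply: IHn => l /andP[/h_in]; lia.
case ha : (h a).
  have [] := @prepend_cellP a s si; first by move=> q /a_s; lia.
  move=> ps cov_ps a_ps; exists (prepend_cell a s); split => // l.
  by rewrite cov_ps cov; case: eqVneq => [->|]; rewrite ?ha ?andbT.
exists s; split => [//||q /a_s]; last lia.
by move=> l; rewrite cov; case: eqVneq => [->|]; rewrite ?ha ?andbT ?andbF.
Qed.

Lemma row_config_covered (sg sg' h : int -> bool) : row_config sg sg' h ->
  exists2 s, interlaced s & covered s = h.
Proof.
move=> [[N hN] _].
have h_in l : h l -> - N <= l < - N + `|2 * N + 1|%:Z.
  by move=> hl; have := contraL (hN l) hl; lia.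
have [s [si cov _]] := covered_surj h_in.
by exists s => //; apply: funext.
Qed.

(* sigma has a particle at each left and a hole at each right endpoint of s. *)
Definition admissible (s : seq (int * int)) (sg : int -> bool) : Prop :=
  forall l, endpoint s l -> sg l = covered s l.

Lemma admissible_cons (x y : int) s sg : interlaced ((x, y) :: s) ->
  admissible ((x, y) :: s) sg <-> [/\ sg x, ~~ sg y & admissible s sg].
Proof.
move=> xys; have [xy _ _] := interlaced_inv xys.
have [covy _] := interlaced_tail xys (lexx y).
have tail_gt l : endpoint s l -> y < l.
  by move=> sl; rewrite ltNge; apply/negP => /(interlaced_tail xys) [_]; rewrite sl.
split => [adm|[sx sy adm] l].
  split; first by rewrite adm !(endpoint_cons, covered_cons) /= ?eqxx //; lia.
    by rewrite adm !(endpoint_cons, covered_cons) /= ?eqxx ?covy ?orbT //; lia.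
  move=> l sl; have yl := tail_gt l sl.
  rewrite adm ?endpoint_cons ?sl ?orbT // covered_cons.
  by have -> : (x <= l < y) = false by lia.
rewrite endpoint_cons covered_cons /=.
case: (eqVneq l x) => [->|lx]; first by rewrite sx; lia.
case: (eqVneq l y) => [->|ly]; first by rewrite covy (negbTE sy); lia.
move=> /= sl; have yl := tail_gt l sl.
by rewrite adm //; have -> : (x <= l < y) = false by lia.
Qed.

Lemma vertex_allowedE W N E S : vertex_allowed W N E S =
  if W (+) E then (N == E) && (S == ~~ N) else N == S.
Proof. by case: W; case: N; case: E; case: S. Qed.

Lemma row_config_coveredE (sg sg' : int -> bool) s : interlaced s ->
  row_config sg sg' (covered s) <->
  admissible s sg /\ sg' = (fun l => sg l (+) endpoint s l).
Proof.
move=> si; split => [[_ allowed]|[adm ->]].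
  split => [l sl|].
    by have := allowed l; rewrite vertex_allowedE covered_jump // sl => /andP[/eqP].
  apply: funext => l; have := allowed l; rewrite vertex_allowedE covered_jump //.
  by case: (endpoint s l) => /= [/andP[_ /eqP ->]|/eqP ->]; rewrite ?addbT ?addbF.
split.
  have [lo [hi out]] := covered_bounded s; exists (`|lo| + `|hi|) => l l_out.
  by have [-> _] : covered s l = false /\ endpoint s l = false by apply: out; lia.
move=> l; rewrite vertex_allowedE covered_jump //.
case sl : (endpoint s l) => /=; last by rewrite addbF.
by rewrite adm ?sl // addbT !eqxx.
Qed.

Section FockOperators.
Variables (K : fieldType) (t : K).

Lemma Eop_move i j c (tau : int -> bool) : i != j -> tau i -> ~~ tau j ->
  Eop t i j (c, tau) = ((1 - t) * (c * sign_above t tau j *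
     (sign_above t (maya_set tau j) i)^-1), maya_unset (maya_set tau j) i).
Proof.
move=> ij ti tj; rewrite /Eop /psi_plus /= (negbTE tj) /psi_minus /=.
by rewrite /maya_set (negbTE ij) ti.
Qed.

Lemma Eop_coef0 i j tau : (Eop t i j (0, tau)).1 = 0.
Proof.
by rewrite /Eop /psi_plus /psi_minus /=; case: (tau j) => /=; case: ifP;
  rewrite /= ?mul0r ?mulr0.
Qed.

Lemma Eop_blocked i j c (tau : int -> bool) : i != j -> ~~ (tau i && ~~ tau j) ->
  (Eop t i j (c, tau)).1 = 0.
Proof.
move=> ij; rewrite /Eop /psi_plus /psi_minus /=.
case tj : (tau j) => /=; first by case: ifP; rewrite /= ?mul0r ?mulr0.
by rewrite andbT /maya_set (negbTE ij) => /negbTE ->; rewrite mulr0.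
Qed.

Lemma Eprod_cons p s v : Eprod t (p :: s) v = Eop t p.1 p.2 (Eprod t s v).
Proof. by []. Qed.

Lemma Eprod_diagram s c (sg : int -> bool) : interlaced s -> admissible s sg ->
  (Eprod t s (c, sg)).2 = fun l => sg l (+) endpoint s l.
Proof.
elim: s => [|[x y] s IHs] xys; first by move=> _; apply: funext => l; rewrite addbF.
have [xy si _] := interlaced_inv xys.
have [_ sx] := interlaced_tail xys (ltW xy); have [_ sy] := interlaced_tail xys (lexx y).
move=> /(admissible_cons _ xys) [sgx sgy adm]; have := IHs si adm.
rewrite Eprod_cons; case: (Eprod t s (c, sg)) => [c' tau] tau_eq.
rewrite /= in tau_eq; subst tau.
rewrite (@Eop_move x y) ?sx ?sy ?addbF //; last lia.
apply: funext => l; rewrite /maya_unset /maya_set endpoint_cons /=.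
case: (eqVneq l x) => [->|_]; first by rewrite sgx.
by case: (eqVneq l y) => [->|_]; rewrite ?sy ?(negbTE sgy).
Qed.

Lemma Eprod_admissible s c (sg : int -> bool) : interlaced s ->
  (Eprod t s (c, sg)).1 != 0 -> admissible s sg.
Proof.
elim: s => [|[x y] s IHs] // xys; have [xy si _] := interlaced_inv xys.
have [_ sx] := interlaced_tail xys (ltW xy); have [_ sy] := interlaced_tail xys (lexx y).
rewrite Eprod_cons; have := @Eprod_diagram s c sg si; have := IHs si.
case: (Eprod t s (c, sg)) => [c' tau] IH diag.
have [-> |c'0] := eqVneq c' 0; first by rewrite Eop_coef0 eqxx.
have adm := IH c'0; have tau_eq : tau = _ := diag adm; subst tau.
case sgxy : (sg x && ~~ sg y).
  by move=> _; apply/admissible_cons => //; case/andP: sgxy.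
by rewrite (Eop_blocked (i:=x) (j:=y)) ?sx ?sy ?addbF ?sgxy ?eqxx //; lia.
Qed.

End FockOperators.

Section Coefficients.
Variables (K : fieldType) (t : K).
Hypothesis t_neq0 : t != 0.

Lemma sign_above_ord (tau : int -> bool) (M i : int) (n : nat) :
  (forall l, M < l -> ~~ tau l) -> M <= i + n%:Z ->
  sign_above t tau i = \prod_(k < n) (- t) ^+ tau (i + 1 + k%:Z).
Proof.
move=> vac Mn; rewrite /sign_above fsbig_mkcond.
rewrite (fsbigT_int_window _ (a := i + 1) (n := n)) => [|l l_out].
  by apply: eq_bigr => k _; rewrite /patch ifT // in_setE /=; lia.
rewrite /patch; case: ifPn => //; rewrite in_setE /= => il.
by rewrite (negbTE (vac _ _)) ?expr0 //; lia.
Qed.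

Lemma sign_above_neq0 (tau : int -> bool) (M i : int) :
  (forall l, M < l -> ~~ tau l) -> sign_above t tau i != 0.
Proof.
move=> vac; rewrite (@sign_above_ord tau M i `|M - i|) //; last lia.
by apply/prodf_neq0 => k _; rewrite expf_neq0 // oppr_eq0.
Qed.

Lemma sign_above_split (tau : int -> bool) (M i j : int) :
  (forall l, M < l -> ~~ tau l) -> i < j ->
  sign_above t tau i =
  \prod_(k < `|j - i|) (- t) ^+ tau (i + 1 + k%:Z) * sign_above t tau j.
Proof.
move=> vac ij.
rewrite (@sign_above_ord tau M i (`|j - i| + `|M - j|)) //; last lia.
rewrite (@sign_above_ord tau M j `|M - j|) //; last lia.
rewrite big_split_ord; congr (_ * _); apply: eq_bigr => k _.
by congr (_ ^+ tau _) => /=; lia.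
Qed.

Lemma sign_above_set (tau : int -> bool) j :
  sign_above t (maya_set tau j) j = sign_above t tau j.
Proof.
apply: eq_fsbigr => l; rewrite in_setE /= => jl.
by rewrite /maya_set; have -> : (l == j) = false by lia.
Qed.

Lemma sign_above_set_lt (tau : int -> bool) (M i j : int) :
  (forall l, M < l -> ~~ tau l) -> i < j -> ~~ tau j ->
  sign_above t (maya_set tau j) i =
  \prod_(k < `|j - i|.-1) (- t) ^+ tau (i + 1 + k%:Z) * (- t) * sign_above t tau j.
Proof.
move=> vac ij tj.
have vac' l : Num.max M j < l -> ~~ maya_set tau j l.
  move=> Ml; rewrite /maya_set; have -> : (l == j) = false by lia.
  by apply: vac; lia.
rewrite (sign_above_split vac' ij) sign_above_set.
have -> : `|j - i|%N = (`|j - i|.-1).+1 by lia.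
rewrite big_ord_recr /=; congr (_ * _ * _).
  apply: eq_bigr => k _; rewrite /maya_set.
  by have kl := ltn_ord k; have -> : (i + 1 + (k : nat)%:Z == j) = false by lia.
by rewrite /maya_set; have -> : (i + 1 + (`|j - i|.-1)%:Z == j) = true by lia.
Qed.

(* The product of the vertex weights omega6, then omega2 or omega4, then omega5
   along a horizontal segment [p.1, p.2] of a row configuration. *)
Definition interval_weight (x : K) (sg : int -> bool) (p : int * int) : K :=
  (t - 1) * x *
  \prod_(k < `|p.2 - p.1|.-1) (if sg (p.1 + 1 + k%:Z) then - x else t * x).

Lemma eq_interval_weight x (sg1 sg2 : int -> bool) (i j : int) : i < j ->
  (forall l, i < l < j -> sg1 l = sg2 l) ->
  interval_weight x sg1 (i, j) = interval_weight x sg2 (i, j).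
Proof.
move=> ij sg12; congr (_ * _); apply: eq_bigr => k _.
by rewrite /= sg12 //; have := ltn_ord k => /=; lia.
Qed.

Lemma Eop_coef x (tau : int -> bool) (M i j : int) c :
  (forall l, M < l -> ~~ tau l) -> i < j -> tau i -> ~~ tau j ->
  (x * t) ^+ `|j - i| * (Eop t i j (c, tau)).1 = c * interval_weight x tau (i, j).
Proof.
move=> vac ij ti tj; rewrite Eop_move //; last lia.
rewrite (sign_above_set_lt vac ij tj) /interval_weight /=.
have -> : `|j - i|%N = (`|j - i|.-1).+1 by lia.
set d := (`|j - i|.-1)%N; set sj := sign_above t tau j.
set P := \prod_(k < d) (- t) ^+ tau (i + 1 + k%:Z).
have sj_neq0 : sj != 0 := sign_above_neq0 _ vac.
have P_neq0 : P != 0.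
  by apply/prodf_neq0 => k _; rewrite expf_neq0 // oppr_eq0.
have -> : \prod_(k < d) (if tau (i + 1 + k%:Z) then - x else t * x) = (x * t) ^+ d / P.
  have -> : (x * t) ^+ d = \prod_(k < d) (x * t) by rewrite prodr_const card_ord.
  rewrite /P -prodfV -big_split.
  apply: eq_bigr => k _; case: (tau _); rewrite /= ?expr1 ?expr0 ?invr1.
    by rewrite invrN mulrN mulfK.
  by rewrite mulr1 mulrC.
rewrite [_ ^+ d.+1]exprS; field.
by rewrite sj_neq0 P_neq0 oppr_eq0 t_neq0.
Qed.

Lemma Eprod_coef x s c (sg : int -> bool) (M : int) :
  (forall l, M < l -> ~~ sg l) -> interlaced s -> admissible s sg ->
  (x * t) ^+ Eweight s * (Eprod t s (c, sg)).1 =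
  c * \prod_(p <- s) interval_weight x sg p.
Proof.
move=> vac; elim: s => [|[i j] s IHs] ijs.
  by rewrite /Eweight !big_nil expr0 mul1r mulr1.
have [ij si _] := interlaced_inv ijs.
move=> /(admissible_cons _ ijs) [sgi sgj adm].
have := Eprod_diagram t c si adm; have := IHs si adm.
rewrite Eprod_cons big_cons /Eweight big_cons -/(Eweight s) exprD.
case: (Eprod t s (c, sg)) => [c' tau] IH tau_eq; rewrite /= in IH tau_eq; subst tau.
have [lo [hi out]] := covered_bounded s.
have vac' l : Num.max M hi < l -> ~~ (sg l (+) endpoint s l).
  move=> Ml; have [_ ->] : covered s l = false /\ endpoint s l = false by apply: out; lia.
  by rewrite addbF vac //; lia.
have [_ si_] := interlaced_tail ijs (ltW ij).
have [_ sj_] := interlaced_tail ijs (lexx j).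
rewrite mulrAC (Eop_coef _ _ vac' ij) /= ?si_ ?sj_ ?addbF //.
rewrite (@eq_interval_weight _ _ sg _ _ ij) => [|l /andP[_ lj]]; last first.
  by have [_ ->] := interlaced_tail ijs (ltW lj); rewrite addbF.
transitivity ((x * t) ^+ Eweight s * c' * interval_weight x sg (i, j)); first ring.
by rewrite IH; ring.
Qed.

End Coefficients.

Section RowWeights.
Variables (K : fieldType) (t : K).
Hypothesis t_neq0 : t != 0.

Definition vertex_weight (x : K) : bool -> bool -> bool -> bool -> K :=
  Omega 1 (- x) 1 (t * x) 1 ((t - 1) * x).

Definition row_weight x (sg sg' h : int -> bool) : K :=
  \big[*%R/1]_(l \in [set: int]) vertex_weight x (h (l - 1)) (sg l) (h l) (sg' l).

Definition column_weight x (sg : int -> bool) s (l : int) : K :=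
  vertex_weight x (covered s (l - 1)) (sg l) (covered s l) (sg l (+) endpoint s l).

Lemma column_weight_interval x (sg : int -> bool) (i j l : int) :
  i < j -> sg i -> ~~ sg j ->
  column_weight x sg [:: (i, j)] l =
  if l == i then (t - 1) * x
  else if i < l < j then (if sg l then - x else t * x) else 1.
Proof.
move=> ij sgi sgj; rewrite /column_weight /covered /endpoint /= !orbF.
case: (eqVneq l i) => [->|li].
  have -> : (i <= i - 1 < j) = false by lia.
  have -> : (i <= i < j) = true by lia.
  by rewrite sgi.
case: (eqVneq l j) => [->|lj].
  have -> : (i <= j - 1 < j) = true by lia.
  have -> : (i <= j < j) = false by lia.
  have -> : (i < j < j) = false by lia.
  by rewrite orbT (negbTE sgj).
have [lin|lout] := boolP (i < l < j).
  have -> : (i <= l - 1 < j) = true by lia.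
  have -> : (i <= l < j) = true by lia.
  by case: (sg l).
have -> : (i <= l - 1 < j) = false by lia.
have -> : (i <= l < j) = false by lia.
by case: (sg l).
Qed.

Lemma prod_column_weight_interval x (sg : int -> bool) (i j : int) :
  i < j -> sg i -> ~~ sg j ->
  \big[*%R/1]_(l \in [set: int]) column_weight x sg [:: (i, j)] l =
  interval_weight t x sg (i, j).
Proof.
move=> ij sgi sgj; under eq_fsbigr do rewrite column_weight_interval //.
rewrite (fsbigT_int_window _ (a := i) (n := (`|j - i|.-1).+2)) => [|l l_out]; last first.
  have -> : (l == i) = false by lia.
  by have -> : (i < l < j) = false by lia.
rewrite big_ord_recl big_ord_recr /= addr0 eqxx.
have -> : (i + (bump 0 `|j - i|.-1)%:Z == i) = false by rewrite /bump; lia.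
have -> : (i < i + (bump 0 `|j - i|.-1)%:Z < j) = false by rewrite /bump; lia.
rewrite mulr1; congr (_ * _); apply: eq_bigr => k _; have := ltn_ord k => kl.
have -> : (i + (bump 0 k)%:Z == i) = false by rewrite /bump; lia.
have -> : (i < i + (bump 0 k)%:Z < j) = true by rewrite /bump; lia.
by have -> : i + (bump 0 k)%:Z = i + 1 + k%:Z by rewrite /bump; lia.
Qed.

Lemma column_weight_cons x (sg : int -> bool) (i j : int) s l :
  interlaced ((i, j) :: s) ->
  column_weight x sg ((i, j) :: s) l =
  column_weight x sg s l * column_weight x sg [:: (i, j)] l.
Proof.
move=> ijs; rewrite /column_weight !covered_cons endpoint_cons /=.
have [lj|jl] := lerP l j.
  have [-> ->] := interlaced_tail ijs lj.
  have lj1 : l - 1 <= j by lia.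
  have [-> _] := interlaced_tail ijs lj1.
  by rewrite !orbF addbF; case: (sg l); rewrite /vertex_weight /= mul1r.
have [ij _ _] := interlaced_inv ijs.
have -> : (i <= l - 1 < j) = false by lia.
have -> : (i <= l < j) = false by lia.
have -> : (l == i) || (l == j) = false by lia.
by rewrite /= !addbF; case: (sg l); rewrite mulr1.
Qed.

Lemma column_weight_bounded x (sg : int -> bool) s : exists a b : int,
  forall l, (l < a) || (b < l) -> column_weight x sg s l = 1.
Proof.
have [lo [hi out]] := covered_bounded s; exists lo, (hi + 1) => l l_out.
rewrite /column_weight.
have [-> ->] : covered s l = false /\ endpoint s l = false by apply: out; lia.
have [-> _] : covered s (l - 1) = false /\ endpoint s (l - 1) = false by apply: out; lia.
by rewrite addbF; case: (sg l).
Qed.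

Lemma row_weight_covered x (sg : int -> bool) s : interlaced s -> admissible s sg ->
  row_weight x sg (fun l => sg l (+) endpoint s l) (covered s) =
  \prod_(p <- s) interval_weight t x sg p.
Proof.
rewrite [LHS](_ : _ = \big[*%R/1]_(l \in [set: int]) column_weight x sg s l) //.
elim: s => [|[i j] s IHs] ijs.
  by move=> _; rewrite big_nil fsbig1 // => l _; rewrite /column_weight; case: (sg l).
have [ij si _] := interlaced_inv ijs.
move=> /(admissible_cons _ ijs) [sgi sgj adm].
under eq_fsbigr do rewrite column_weight_cons //.
have [a1 [b1 out1]] := column_weight_bounded x sg s.
have [a2 [b2 out2]] := column_weight_bounded x sg [:: (i, j)].
rewrite (fsbigT_int_split _ out1 out2) IHs // prod_column_weight_interval //.
by rewrite big_cons mulrC.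
Qed.

Definition A_term x (sg' sg : int -> bool) (s : seq (int * int)) : K :=
  (x * t) ^+ Eweight s * pairing sg' (Eprod t s (1, sg)).

Lemma A_term_eq0 x (sg sg' : int -> bool) s : interlaced s ->
  ~ row_config sg sg' (covered s) -> A_term x sg' sg s = 0.
Proof.
move=> si not_row; rewrite /A_term /pairing.
case: asboolP => [diag|_]; last by rewrite mulr0.
have [->|c_neq0] := eqVneq (Eprod t s (1, sg)).1 0; first by rewrite mulr0.
have adm := Eprod_admissible si c_neq0.
exfalso; apply/not_row/(row_config_coveredE _ _ si); split => //.
by rewrite -diag (Eprod_diagram _ _ si adm).
Qed.

Lemma A_term_row x (sg sg' : int -> bool) s (M : int) :
  (forall l, M < l -> ~~ sg l) -> interlaced s -> row_config sg sg' (covered s) ->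
  A_term x sg' sg s = row_weight x sg sg' (covered s).
Proof.
move=> vac si /(row_config_coveredE _ _ si) [adm ->].
rewrite /A_term /pairing asboolT ?(Eprod_diagram _ _ si adm) //.
by rewrite (Eprod_coef t_neq0 _ _ vac si adm) mul1r row_weight_covered.
Qed.

Lemma row_partition_terms x (sg sg' : int -> bool) (M : int) :
  (forall l, M < l -> ~~ sg l) ->
  row_partition 1 (- x) 1 (t * x) 1 ((t - 1) * x) sg sg' =
  \sum_(s \in [set s | interlaced s /\ row_config sg sg' (covered s)]) A_term x sg' sg s.
Proof.
move=> vac; rewrite /row_partition.
have -> : [set h | row_config sg sg' h] =
    covered @` [set s | interlaced s /\ row_config sg sg' (covered s)].
  apply/seteqP; split => [h /= row_h|_ [s [_ row_s] <-] //].
  by have [s si cov_s] := row_config_covered row_h; exists s; rewrite ?cov_s.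
rewrite fsbig_image => [|s1 s2]; last first.
  rewrite !in_setE => -[s1i _] [s2i _] cov12.
  by apply: covered_inj => // l; rewrite cov12.
apply: eq_fsbigr => s; rewrite in_setE => -[si row_s].
exact/esym/(A_term_row _ vac).
Qed.

Lemma A_coef_terms x (sg' sg : int -> bool) : A_coef x t sg' sg =
  A_term x sg' sg [::] +
  \sum_(s \in [set s | interlaced s /\ row_config sg sg' (covered s)] `\ [::])
    A_term x sg' sg s.
Proof.
have -> : A_coef x t sg' sg = A_term x sg' sg [::] +
    \sum_(s \in [set s | s != [::] /\ interlaced s]) A_term x sg' sg s.
  by rewrite /A_term /Eweight big_nil expr0 mul1r.
congr (_ + _); apply/esym/fsbig_widen => [s [[si _] /eqP s_nil]|s [[s_nil si] not_J]] //.
by rewrite /= A_term_eq0 // => row_s; apply: not_J; split => //; apply/eqP.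
Qed.

End RowWeights.

Lemma row_config_nil (sg sg' : int -> bool) :
  row_config sg sg' (covered [::]) <-> sg' = sg.
Proof.
rewrite row_config_coveredE //; split => [[_ ->]|->].
  by apply: funext => l; rewrite addbF.
by split => //; apply: funext => l; rewrite addbF.
Qed.

Lemma row_config_diag (sg : int -> bool) s : interlaced s ->
  row_config sg sg (covered s) -> s = [::].
Proof.
case: s => [//|[u v] s] uvs /(row_config_coveredE _ _ uvs) [_ /(congr1 (fun f => f u))].
by rewrite endpoint_cons eqxx /=; case: (sg u).
Qed.

Theorem proposition4p9 (K : fieldType) (x t : K) (t_neq0 : t != 0)
  (sigma sigma' : int -> bool) (hs : is_maya sigma) (hs' : is_maya sigma') :
  A_coef x t sigma' sigma =
  row_partition 1 (- x) 1 (t * x) 1 ((t - 1) * x) sigma sigma'.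
Proof.
have [_ [M [_ vac]]] := hs.
rewrite A_coef_terms (row_partition_terms t_neq0 _ _ vac).
have [<-|neq] := pselect (sigma = sigma').
  have -> : [set s | interlaced s /\ row_config sigma sigma (covered s)] = [set [::]].
    apply/seteqP; split => [s [si row_s]|_ ->]; first exact: row_config_diag si row_s.
    by split => //; apply/row_config_nil.
  by rewrite setDv fsbig_set0 fsbig_set1 addr0.
have not_row_nil : ~ row_config sigma sigma' (covered [::]).
  by move=> /row_config_nil sigma_eq; apply: neq.
by rewrite not_setD1 => [|[_ /not_row_nil]] //; rewrite A_term_eq0 ?add0r.
Qed.
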